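(* Let $\boldsymbol{\Omega}_M=\boldsymbol{\Omega}^{(0)}\boldsymbol{\Omega}^{(0)\top}+\sum_{q=1}^Q\boldsymbol{\Omega}^{(q)}\boldsymbol{\Omega}^{(q)\top}$ and $\bar{\mathbf S}$ be as in the context. Then the $i$-th leading eigenvalue of $\boldsymbol{\Omega}_M$ satisfies $$\lambda_i(\boldsymbol{\Omega}_M)=\begin{cases}\|\boldsymbol\theta\|^2\|\boldsymbol\delta\|^2\,\lambda_i(\bar{\mathbf S}), & 1\le i\le K,\\ 0, & i>K.\end{cases}$$ Moreover, let $\bar{\mathbf S}=\mathbf J\boldsymbol\Sigma\mathbf J^\top$ be an eigenvalue decomposition of $\bar{\mathbf S}$ with $\mathbf J\in\mathbb R^{K\times K}$ orthogonal and $\boldsymbol\Sigma$ diagonal with entries in decreasing order. Then $\boldsymbol{\Omega}_M$ has the compact eigenvalue decomposition $\boldsymbol{\Omega}_M=\mathbf U\boldsymbol\Lambda\mathbf U^\top$ with $\boldsymbol\Lambda=\|\boldsymbol\theta\|^2\|\boldsymbol\delta\|^2\boldsymbol\Sigma$ and $\mathbf U\in\mathbb R^{n\times K}$ having orthonormal columns, whose $i$-th row is $$\mathbf U_{\bar i}=\frac{\theta_i}{\|\boldsymbol\theta^{(l_i)}\|}\,\mathbf J_{\bar{l_i}},\qquad 1\le i\le n,$$ where $\mathbf J_{\bar k}$ denotes the $k$-th row of $\mathbf J$. Finally, if $\|\boldsymbol\theta^{(k)}\|\asymp\|\boldsymbol\theta^{(k')}\|$ for all $k,k'\in\{1,\dots,K\}$,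 then $\|\mathbf U_{\bar i}\|\asymp\theta_i/\|\boldsymbol\theta\|$ uniformly in $i$.
   Context: Fix integers $K\ge2$, $K'\ge1$, $Q\ge1$. Primary nodes are $\{1,\dots,n\}$ with community labels $l_i\in\{1,\dots,K\}$, every community nonempty; bipartite nodes are $\{1,\dots,m\}$ with labels $r_j\in\{1,\dots,K'\}$ (the same labels for all $q$), every bipartite community nonempty. Parameters: $\boldsymbol\theta=(\theta_1,\dots,\theta_n)^\top\in(0,1]^n$, $\boldsymbol\delta=(\delta_1,\dots,\delta_m)^\top\in(0,1]^m$, a symmetric $\mathbf E\in[0,1]^{K\times K}$, and $\mathbf F^{(q)}\in[0,1]^{K\times K'}$ for $q=1,\dots,Q$. Define $\boldsymbol\Omega^{(0)}\in\mathbb R^{n\times n}$ by $\boldsymbol\Omega^{(0)}(i,j)=\theta_i\theta_j\mathbf E(l_i,l_j)$ and $\boldsymbol\Omega^{(q)}\in\mathbb R^{n\times m}$ by $\boldsymbol\Omega^{(q)}(i,j)=\theta_i\delta_j\mathbf F^{(q)}(l_i,r_j)$. Let $\boldsymbol\theta^{(k)}\in\mathbb R^n$ with $\theta^{(k)}_i=\theta_i\mathbb I(l_i=k)$, $\boldsymbol\delta^{(k')}\in\mathbb R^m$ with $\delta^{(k')}_j=\delta_j\mathbb I(r_j=k')$; $\boldsymbol\Psi_\theta=\mathrm{diag}(\|\boldsymbol\theta^{(k)}\|/\|\boldsymbol\theta\|)_{k=1}^K$, $\boldsymbol\Psi_\delta=\mathrm{diag}(\|\boldsymbol\delta^{(k')}\|/\|\boldsymbol\delta\|)_{k'=1}^{K'}$;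 $\mathbf S^{(0)}=\boldsymbol\Psi_\theta\mathbf E\boldsymbol\Psi_\theta$, $\mathbf S^{(q)}=\boldsymbol\Psi_\theta\mathbf F^{(q)}\boldsymbol\Psi_\delta$, and $\bar{\mathbf S}=(\|\boldsymbol\theta\|^2/\|\boldsymbol\delta\|^2)\mathbf S^{(0)}\mathbf S^{(0)\top}+\sum_{q=1}^Q\mathbf S^{(q)}\mathbf S^{(q)\top}$. Norms $\|\cdot\|$ are Euclidean. Eigenvalues of the positive semidefinite matrices $\boldsymbol\Omega_M$, $\bar{\mathbf S}$ are ordered decreasingly. For the last assertion, all quantities other than $K,K',Q$ may depend on $n$, and $a_n\asymp b_n$ means $b_n/C\le a_n\le Cb_n$ for a constant $C$ independent of $n$ and all large $n$. *)

From HB Require Import structures.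
From mathcomp Require Import all_boot all_order all_algebra.
From Stdlib Require Import ClassicalEpsilon.
Set Implicit Arguments. Unset Strict Implicit. Unset Printing Implicit Defensive.
Import Order.TTheory GRing.Theory Num.Theory.
Local Open Scope ring_scope.

Section Defs.
Variable R : rcfType.

Definition eigen_seq (p : nat) (A : 'M[R]_p) (s : seq R) : Prop :=
  sorted (fun x y : R => y <= x) s /\ char_poly A = \prod_(x <- s) ('X - x%:P).

(* The decreasingly ordered eigenvalue list (chosen; unique when it exists,
   which is the case for real symmetric matrices). *)
Definition eigvals (p : nat) (A : 'M[R]_p) : seq R :=
  epsilon (inhabits [::]) (eigen_seq A).

(* eigval A i = lambda_{i+1}(A)  (0-based index i; 0 past the dimension). *)
Definition eigval (p : nat) (A : 'M[R]_p) (i : nat) : R := nth 0 (eigvals A) i.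

Variables (K K' Q : nat).

Definition vnorm (p : nat) (v : 'I_p -> R) : R := Num.sqrt (\sum_i v i ^+ 2).

Definition blocknorm (p C : nat) (l : 'I_p -> 'I_C) (v : 'I_p -> R) (k : 'I_C) : R :=
  vnorm (fun i => if l i == k then v i else 0).

Definition Psi (p C : nat) (l : 'I_p -> 'I_C) (v : 'I_p -> R) : 'M[R]_C :=
  diag_mx (\row_k (blocknorm l v k / vnorm v)).

Section Model.
Variables (n m : nat) (l : 'I_n -> 'I_K) (r : 'I_m -> 'I_K')
  (theta : 'I_n -> R) (delta : 'I_m -> R)
  (E : 'M[R]_K) (F : 'I_Q -> 'M[R]_(K, K')).
(* the q-th bipartite matrix F^(q+1) is F q (0-based) *)

Definition Omega0 : 'M[R]_n :=
  \matrix_(i, j) (theta i * theta j * E (l i) (l j)).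

Definition OmegaQ (q : 'I_Q) : 'M[R]_(n, m) :=
  \matrix_(i, j) (theta i * delta j * F q (l i) (r j)).

Definition OmegaM : 'M[R]_n :=
  Omega0 *m Omega0^T + \sum_(q < Q) (OmegaQ q *m (OmegaQ q)^T).

Definition S0 : 'M[R]_K := Psi l theta *m E *m Psi l theta.

Definition SQ (q : 'I_Q) : 'M[R]_(K, K') := Psi l theta *m F q *m Psi r delta.

Definition Sbar : 'M[R]_K :=
  ((vnorm theta ^+ 2 / vnorm delta ^+ 2) *: (S0 *m S0^T))
  + \sum_(q < Q) (SQ q *m (SQ q)^T).

Definition Umat (J : 'M[R]_K) : 'M[R]_(n, K) :=
  \matrix_(i, k) (theta i / blocknorm l theta (l i) * J (l i) k).

Definition model_ok : Prop :=
  [/\ forall k : 'I_K, exists i, l i = k,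
      forall k : 'I_K', exists j, r j = k,
      forall i, 0 < theta i <= 1,
      forall j, 0 < delta j <= 1
    & [/\ E^T = E, forall a b, 0 <= E a b <= 1
         & forall q a b, 0 <= F q a b <= 1]].
End Model.

Definition evd (S J : 'M[R]_K) (sigma : 'rV[R]_K) : Prop :=
  [/\ J^T *m J = 1%:M,
      forall a b : 'I_K, (a <= b)%N -> sigma 0 b <= sigma 0 a
    & S = J *m diag_mx sigma *m J^T].

End Defs.

From HB Require Import structures.
From mathcomp Require Import all_boot all_order all_algebra.
From mathcomp Require Import complex ring.
From Stdlib Require Import ClassicalEpsilon.
Set Implicit Arguments. Unset Strict Implicit. Unset Printing Implicit Defensive.
Import Order.TTheory GRing.Theory Num.Theory.
Local Open Scope ring_scope.

(* Let N be the n x K matrix with entries theta_i / ||theta^(k)|| when l_i = k and 0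
   otherwise; it has orthonormal columns, and theta_i theta_j E(l_i, l_j) is the entry
   of ||theta||^2 N S0 N^T (similarly for the bipartite blocks with N_delta).  Hence
   Omega_M = c N Sbar N^T with c = ||theta||^2 ||delta||^2, and Sylvester's identity
   char(N A N^T) = X^(n - K) char(A N^T N) = X^(n - K) char(A) shows that the spectrum
   of Omega_M is that of the positive semidefinite matrix c Sbar padded with zeros.
   For Sbar = J Sigma J^T the matrix U = N J has orthonormal columns, and its i-th row
   has norm theta_i / ||theta^(l_i)||; as ||theta||^2 = sum_k ||theta^(k)||^2, comparable
   block norms give ||theta^(l_i)|| <= ||theta|| <= K C ||theta^(l_i)||. *)

Lemma char_poly_mulmx (R : fieldType) n k (A : 'M[R]_(n, k)) (B : 'M[R]_(k, n)) :
  (k <= n)%N -> char_poly (A *m B) = 'X^(n - k) * char_poly (B *m A).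
Proof.
move=> le_kn; pose A' := map_mx polyC A; pose B' := map_mx polyC B.
have eAB : char_poly_mx (A *m B) = 'X%:M - A' *m B' by rewrite /char_poly_mx map_mxM.
have eBA : char_poly_mx (B *m A) = 'X%:M - B' *m A' by rewrite /char_poly_mx map_mxM.
(* Both characteristic polynomials are Schur complements of the same block matrix. *)
pose M := block_mx ('X%:M : 'M_n) A' B' (1%:M : 'M_k).
have detM : \det M = char_poly (A *m B).
  have -> : M = block_mx 1%:M A' 0 1%:M *m block_mx ('X%:M - A' *m B') 0 B' 1%:M.
    by rewrite mulmx_block !mul1mx !mul0mx !add0r mulmx1 subrK.
  by rewrite det_mulmx det_ublock det_lblock !det1 !mul1r mulr1 /char_poly eAB.
have : \det (block_mx (1%:M : 'M_n) 0 (- B') ('X%:M : 'M_k)) * \det M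
       = 'X^n * char_poly (B *m A).
  rewrite -det_mulmx mulmx_block !mul1mx !mul0mx ?addr0 ?add0r ?mulmx1.
  rewrite mul_mx_scalar mul_scalar_mx scalerN addNr det_ublock det_scalar.
  by rewrite /char_poly eBA mulNmx addrC.
rewrite det_lblock det1 mul1r det_scalar detM.
have -> : ('X^n : {poly R}) = 'X^k * 'X^(n - k) by rewrite -exprD subnKC.
by rewrite -mulrA => /mulfI; apply; rewrite expf_neq0 // polyX_eq0.
Qed.

Lemma char_poly_scale_symmetric (R : rcfType) p (A : 'M[R]_p) : A^T = A ->
  exists d : 'I_p -> R, forall c, char_poly (c *: A) = \prod_i ('X - (c * d i)%:P).
Proof.
move=> symA; pose f := real_complex R; pose AC := map_mx f A.
have hermAC : AC \is hermsymmx.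
  apply/is_hermitianmxP; rewrite expr0 scale1r; apply/matrixP => i j.
  rewrite !mxE conj_Creal; first by rewrite -[in LHS]symA mxE.
  by apply/complex_realP; eexists.
have eAC := orthomx_spectralP (hermitian_normalmx hermAC).
have /mxOverP realD := hermitian_spectral_diag_real hermAC.
set P := spectralmx AC in eAC; set D := spectral_diag AC in eAC realD.
exists (fun i => complex.Re (D 0 i)) => c.
have fRe i : f (complex.Re (D 0 i)) = D 0 i.
  by have /complex_realP [x ->] := realD 0 i.
apply: (@map_poly_inj _ _ f).
rewrite map_char_poly map_prod_XsubC map_mxZ -/AC eAC.
have -> : f c *: (invmx P *m diag_mx D *m P) = invmx P *m (diag_mx (f c *: D) *m P).
  by rewrite -mulmxA scalemxAr scalemxAl linearZ.
rewrite char_poly_mulmx // subnn expr0 mul1r mulmxK ?spectral_unit //.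
rewrite char_poly_trig ?diag_mx_is_trig //; apply: eq_bigr => i _.
by rewrite rmorphM !mxE eqxx mulr1n -fRe.
Qed.

Lemma gram_mulmx_orthonormal (R : comPzRingType) a b c d
    (M : 'M[R]_(a, b)) (S : 'M[R]_(b, c)) (N : 'M[R]_(d, c)) :
  N^T *m N = 1%:M -> (M *m S *m N^T) *m (M *m S *m N^T)^T = M *m (S *m S^T) *m M^T.
Proof.
move=> orthoN; rewrite !trmx_mul trmxK -!mulmxA; congr (_ *m _).
by rewrite [N^T *m _]mulmxA orthoN mul1mx !mulmxA.
Qed.

Section PositiveSemidefinite.
Variable R : rcfType.

Definition psdmx p (A : 'M[R]_p) := forall v : 'rV_p, 0 <= (v *m A *m v^T) 0 0.

Lemma psdmx_gram p k (G : 'M[R]_(p, k)) : psdmx (G *m G^T).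
Proof.
move=> v; rewrite mulmxA -[_ *m G^T *m _]mulmxA -trmx_mul mxE sumr_ge0 // => j _.
by rewrite [X in _ * X]mxE -expr2 sqr_ge0.
Qed.

Lemma psdmxD p (A B : 'M[R]_p) : psdmx A -> psdmx B -> psdmx (A + B).
Proof. by move=> psdA psdB v; rewrite mulmxDr mulmxDl mxE addr_ge0. Qed.

Lemma psdmxZ p a (A : 'M[R]_p) : 0 <= a -> psdmx A -> psdmx (a *: A).
Proof. by move=> a_ge0 psdA v; rewrite -scalemxAr -scalemxAl mxE mulr_ge0. Qed.

Lemma psdmx_sum p I (r : seq I) (P : pred I) (A : I -> 'M[R]_p) :
  (forall i, P i -> psdmx (A i)) -> psdmx (\sum_(i <- r | P i) A i).
Proof.
move=> psdA; elim/big_rec: _ => [v|i B Pi psdB]; last exact: psdmxD (psdA i Pi) psdB.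
by rewrite mulmx0 mul0mx mxE.
Qed.

Lemma mulmx_tr_gt0 p (v : 'rV[R]_p) : v != 0 -> 0 < (v *m v^T) 0 0.
Proof.
move=> v_neq0; have sq_ge0 j : true -> 0 <= v 0 j * v^T j 0.
  by move=> _; rewrite [X in _ * X]mxE -expr2 sqr_ge0.
rewrite mxE lt_def sumr_ge0 ?andbT //; apply: contra v_neq0 => /eqP sum0.
apply/eqP/rowP => j; have /eqP := psumr_eq0P sq_ge0 sum0 (i := j) isT.
by rewrite [X in _ * X]mxE -expr2 sqrf_eq0 mxE => /eqP.
Qed.

Lemma psdmx_root_ge0 p (A : 'M[R]_p) x : psdmx A -> root (char_poly A) x -> 0 <= x.
Proof.
move=> psdA; rewrite -eigenvalue_root_char => /eigenvalueP [v Av v_neq0].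
by have := psdA v; rewrite Av -scalemxAl mxE pmulr_lge0 // mulmx_tr_gt0.
Qed.

End PositiveSemidefinite.

Section Eigenvalues.
Variable R : rcfType.

Lemma eigvalsE p (A : 'M[R]_p) s : eigen_seq A s -> eigvals A = s.
Proof.
move=> eigAs; have [sorted_e char_e] :=
  epsilon_spec (inhabits [::]) (eigen_seq A) (ex_intro _ s eigAs).
have [sorted_s char_s] := eigAs.
apply: (sorted_eq _ _ sorted_e sorted_s).
- exact: rev_trans le_trans.
- exact: ge_anti.
by apply: prod_XsubC_eq; rewrite -char_e -char_s.
Qed.

Lemma sym_psdmx_eigen_seq p (A : 'M[R]_p) : A^T = A -> psdmx A ->
  exists s, [/\ eigen_seq A s, size s = p, {in s, forall x, 0 <= x}
              & forall c, char_poly (c *: A) = \prod_(x <- s) ('X - (c * x)%:P)].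
Proof.
move=> /char_poly_scale_symmetric [d charA] psdA.
pose s := sort >=%R [seq d i | i <- enum 'I_p].
have perm_s : perm_eq [seq d i | i <- enum 'I_p] s by rewrite perm_sym perm_sort.
have charAs c : char_poly (c *: A) = \prod_(x <- s) ('X - (c * x)%:P).
  by rewrite -(perm_big _ perm_s) big_map big_enum charA.
have charA1 : char_poly A = \prod_(x <- s) ('X - x%:P).
  by rewrite -[A]scale1r charAs; under eq_bigr do rewrite mul1r.
exists s; split=> //.
- by split; [apply: sort_sorted => x y; apply: le_total | ].
- by rewrite size_sort size_map size_enum_ord.
by move=> x s_x; apply: psdmx_root_ge0 psdA _; rewrite charA1 root_prod_XsubC.
Qed.

Lemma eigval_scale_pad p n k c (A : 'M[R]_p) (B : 'M[R]_n) :
  A^T = A -> psdmx A -> 0 <= c -> char_poly B = 'X^k * char_poly (c *: A) ->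
  (forall i, (i < p)%N -> eigval B i = c * eigval A i)
  /\ (forall i, (p <= i)%N -> eigval B i = 0).
Proof.
move=> symA psdA c_ge0 charB.
have [s [eigAs size_s s_ge0 charAs]] := sym_psdmx_eigen_seq symA psdA.
have eigBs : eigen_seq B ([seq c * x | x <- s] ++ nseq k 0).
  split; last first.
    by rewrite charB charAs big_cat big_map big_nseq mulrC subr0 iter_mulr_1.
  have [sorted_s _] := eigAs.
  have ge_trans : transitive (>=%R : rel R) := rev_trans le_trans.
  rewrite sorted_pairwise // pairwise_cat -!sorted_pairwise //.
  apply/and3P; split.
  - apply/allrelP => _ _ /mapP [x s_x ->] /nseqP [-> _].
    by rewrite mulr_ge0 // s_ge0.
  - by apply: homo_sorted sorted_s => x y le_yx; rewrite ler_wpM2l.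
  - by elim: k {charB} => //= -[|k] //= ->; rewrite lexx.
rewrite /eigval (eigvalsE eigBs) (eigvalsE eigAs); split=> i lt_ip.
  by rewrite nth_cat size_map size_s lt_ip (nth_map 0) ?size_s.
by rewrite nth_cat size_map size_s ltnNge lt_ip nth_nseq if_same.
Qed.

End Eigenvalues.

Section BlockMatrices.
Variable R : rcfType.

Lemma vnorm_ge0 p (w : 'I_p -> R) : 0 <= vnorm w.
Proof. exact: sqrtr_ge0. Qed.

Lemma sqr_vnorm p (w : 'I_p -> R) : vnorm w ^+ 2 = \sum_i w i ^+ 2.
Proof. by rewrite sqr_sqrtr // sumr_ge0 // => i _; rewrite sqr_ge0. Qed.

Definition blockmx p C (lab : 'I_p -> 'I_C) (v : 'I_p -> R) : 'M[R]_(p, C) :=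
  \matrix_(i, k) (if lab i == k then v i else 0).

Definition normed_blockmx p C (lab : 'I_p -> 'I_C) (v : 'I_p -> R) : 'M[R]_(p, C) :=
  \matrix_(i, k) (if lab i == k then v i / blocknorm lab v k else 0).

Lemma tr_Psi p C (lab : 'I_p -> 'I_C) (v : 'I_p -> R) : (Psi lab v)^T = Psi lab v.
Proof. exact: tr_diag_mx. Qed.

Lemma sum_if_eq_mull C (a : 'I_C) (x : R) (G : 'I_C -> R) :
  \sum_k (if a == k then x else 0) * G k = x * G a.
Proof.
rewrite (bigD1 a) //= eqxx big1 ?addr0 // => k /negbTE.
by rewrite eq_sym => ->; rewrite mul0r.
Qed.

Lemma blockmx_bilinear p q C1 C2 (l1 : 'I_p -> 'I_C1) (l2 : 'I_q -> 'I_C2)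
    (v1 : 'I_p -> R) (v2 : 'I_q -> R) (G : 'M[R]_(C1, C2)) :
  \matrix_(i, j) (v1 i * v2 j * G (l1 i) (l2 j)) = blockmx l1 v1 *m G *m (blockmx l2 v2)^T.
Proof.
apply/matrixP => i j; rewrite /blockmx mxE [RHS]mxE.
under eq_bigr => k _ do rewrite [X in _ * X]mxE mxE mulrC.
rewrite sum_if_eq_mull mxE.
under eq_bigr => k _ do rewrite mxE.
by rewrite sum_if_eq_mull mulrCA mulrA.
Qed.

Variables (p C : nat) (lab : 'I_p -> 'I_C) (v : 'I_p -> R).
Hypotheses (lab_surj : forall k, exists i, lab i = k) (v_gt0 : forall i, 0 < v i).

Lemma sqr_blocknorm k : blocknorm lab v k ^+ 2 = \sum_(i | lab i == k) v i ^+ 2.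
Proof.
rewrite sqr_vnorm [RHS]big_mkcond; apply: eq_bigr => i _.
by case: ifP => _ //; rewrite expr0n.
Qed.

Lemma sqr_vnorm_blocknorm : vnorm v ^+ 2 = \sum_k blocknorm lab v k ^+ 2.
Proof.
under [RHS]eq_bigr do rewrite sqr_blocknorm.
by rewrite sqr_vnorm (partition_big lab xpredT).
Qed.

Lemma blocknorm_gt0 k : 0 < blocknorm lab v k.
Proof.
have [i0 <-] := lab_surj k; rewrite sqrtr_gt0 (bigD1 i0) //= eqxx.
by rewrite ltr_pwDl ?exprn_gt0 // sumr_ge0 // => i _; case: ifP; rewrite ?sqr_ge0 ?expr0n.
Qed.

Lemma blocknorm_le_vnorm k : blocknorm lab v k <= vnorm v.
Proof.
apply: ler_wsqrtr; apply: ler_sum => i _.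
by case: ifP => _ //; rewrite expr0n sqr_ge0.
Qed.

Lemma vnorm_gt0 : (0 < C)%N -> 0 < vnorm v.
Proof.
move=> C_gt0; have k0 : 'I_C := Ordinal C_gt0.
exact: lt_le_trans (blocknorm_gt0 k0) (blocknorm_le_vnorm k0).
Qed.

Lemma normed_blockmx_orthonormal :
  (normed_blockmx lab v)^T *m normed_blockmx lab v = 1%:M.
Proof.
apply/matrixP => a b; rewrite !mxE; under eq_bigr => i _ do rewrite !mxE.
have [<-|neq_ab] := eqVneq a b; last first.
  rewrite big1 // => i _; have [->|] := eqVneq (lab i) a; last by rewrite mul0r.
  by rewrite (negbTE neq_ab) mulr0.
rewrite (eq_bigr (fun i => (if lab i == a then v i ^+ 2 else 0) / blocknorm lab v a ^+ 2)).
  by rewrite -mulr_suml -big_mkcond -sqr_blocknorm divff // sqrf_eq0 gt_eqF // blocknorm_gt0.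
by move=> i _; case: ifP; rewrite ?mul0r // -expr2 expr_div_n.
Qed.

Lemma blockmx_factor : (0 < C)%N ->
  blockmx lab v = vnorm v *: (normed_blockmx lab v *m Psi lab v).
Proof.
move=> C_gt0; apply/matrixP => i k; rewrite /Psi mul_mx_diag !mxE.
case: ifP => _; last by rewrite !mul0r mulr0.
have := blocknorm_gt0 k; have := vnorm_gt0 C_gt0.
by move=> vnorm_gt0 blocknorm_gt0; field; rewrite !gt_eqF.
Qed.

Lemma vnorm_le_blocknorm k0 c : 0 <= c ->
    (forall k, blocknorm lab v k <= c * blocknorm lab v k0) ->
  vnorm v <= C%:R * c * blocknorm lab v k0.
Proof.
move=> c_ge0 le_block.
have bk0_ge0 : 0 <= blocknorm lab v k0 := vnorm_ge0 _.
have b_ge0 : 0 <= c * blocknorm lab v k0 by rewrite mulr_ge0.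
have le_sum : \sum_k blocknorm lab v k ^+ 2 <= C%:R * (c * blocknorm lab v k0) ^+ 2.
  rewrite mulr_natl -[C in _ *+ C]card_ord -sumr_const.
  by apply: ler_sum => k _; rewrite ler_sqr ?nnegrE ?vnorm_ge0.
have C_gt0 : (0 < C)%N := leq_ltn_trans (leq0n k0) (ltn_ord k0).
rewrite -mulrA -ler_sqr ?nnegrE ?vnorm_ge0 ?mulr_ge0 ?ler0n //.
rewrite sqr_vnorm_blocknorm (le_trans le_sum) // [X in _ <= X]exprMn.
by apply: ler_wpM2r; rewrite ?exprn_ge0 // -natrX ler_nat -mulnn leq_pmulr.
Qed.

Lemma vnorm_row_Umat (J : 'M[R]_C) i : J^T *m J = 1%:M ->
  vnorm (fun k => Umat lab v J i k) = v i / blocknorm lab v (lab i).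
Proof.
move=> orthoJ; have rowJ_norm : \sum_k J (lab i) k ^+ 2 = 1.
  have /matrixP /(_ (lab i) (lab i)) := mulmx1C orthoJ.
  by rewrite !mxE eqxx mulr1n => <-; apply: eq_bigr => k _; rewrite mxE expr2.
rewrite /vnorm; under eq_bigr => k _ do rewrite mxE exprMn.
by rewrite -mulr_sumr rowJ_norm mulr1 sqrtr_sqr ger0_norm // divr_ge0 ?vnorm_ge0 // ltW.
Qed.

Lemma vnorm_row_Umat_comparable (J : 'M[R]_C) c i : J^T *m J = 1%:M -> 0 < c ->
    (forall k k', blocknorm lab v k <= c * blocknorm lab v k') ->
  let Ui := vnorm (fun k => Umat lab v J i k) in
  let b := v i / vnorm v in
  b / (C%:R * c + 1) <= Ui /\ Ui <= (C%:R * c + 1) * b.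
Proof.
move=> orthoJ c_gt0 le_block Ui b; rewrite /Ui vnorm_row_Umat //.
have beta_gt0 := blocknorm_gt0 (lab i); have vi_gt0 := v_gt0 i.
have v_pos : 0 < vnorm v := lt_le_trans beta_gt0 (blocknorm_le_vnorm _).
have Cc_ge0 : 0 <= C%:R * c by rewrite mulr_ge0 ?ler0n ?ltW.
have b_le : b <= v i / blocknorm lab v (lab i).
  by rewrite ler_pM2l // lef_pV2 ?posrE // blocknorm_le_vnorm.
split.
  have b_ge0 : 0 <= b by rewrite divr_ge0 ?ltW.
  by apply: le_trans b_le; rewrite ler_pdivrMr ?ltr_wpDl // ler_peMr // lerDr.
have le_v := vnorm_le_blocknorm (ltW c_gt0) (fun k => le_block k (lab i)).
rewrite /b mulrCA ler_pM2l // ler_pdivlMr // mulrC ler_pdivrMr //.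
apply: le_trans le_v _; apply: ler_wpM2r; first exact: ltW.
by rewrite lerDl.
Qed.

End BlockMatrices.

Lemma gram_blockmx_bilinear (R : rcfType) p q C1 C2 (l1 : 'I_p -> 'I_C1) (l2 : 'I_q -> 'I_C2)
    (v1 : 'I_p -> R) (v2 : 'I_q -> R) (G : 'M[R]_(C1, C2)) :
  (forall k, exists i, l1 i = k) -> (forall i, 0 < v1 i) -> (0 < C1)%N ->
  (forall k, exists j, l2 j = k) -> (forall j, 0 < v2 j) -> (0 < C2)%N ->
  let X := \matrix_(i, j) (v1 i * v2 j * G (l1 i) (l2 j)) in
  let S := Psi l1 v1 *m G *m Psi l2 v2 in
  X *m X^T = (vnorm v1 ^+ 2 * vnorm v2 ^+ 2) *:
               (normed_blockmx l1 v1 *m (S *m S^T) *m (normed_blockmx l1 v1)^T).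
Proof.
move=> surj1 v1_gt0 C1_gt0 surj2 v2_gt0 C2_gt0 X S.
have -> : X = (vnorm v1 * vnorm v2) *: (normed_blockmx l1 v1 *m S *m (normed_blockmx l2 v2)^T).
  rewrite /X /S blockmx_bilinear !blockmx_factor // linearZ /= trmx_mul tr_Psi.
  by rewrite -!scalemxAl -scalemxAr scalerA !mulmxA.
rewrite linearZ /= -scalemxAl -scalemxAr scalerA.
by rewrite gram_mulmx_orthonormal ?normed_blockmx_orthonormal // mulrACA -!expr2.
Qed.

Section Model.
Variables (R : rcfType) (K K' Q n m : nat) (l : 'I_n -> 'I_K) (r : 'I_m -> 'I_K')
  (theta : 'I_n -> R) (delta : 'I_m -> R) (E : 'M[R]_K) (F : 'I_Q -> 'M[R]_(K, K')).
Hypotheses (l_surj : forall k, exists i, l i = k) (r_surj : forall k, exists j, r j = k)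
  (theta_gt0 : forall i, 0 < theta i) (delta_gt0 : forall j, 0 < delta j)
  (K_gt0 : (0 < K)%N) (K'_gt0 : (0 < K')%N).

Let N := normed_blockmx l theta.
Let c := vnorm theta ^+ 2 * vnorm delta ^+ 2.
Let Sb := Sbar l r theta delta E F.

Lemma OmegaM_factor : OmegaM l r theta delta E F = N *m (c *: Sb) *m N^T.
Proof.
have theta_pos := vnorm_gt0 l_surj theta_gt0 K_gt0.
have delta_pos := vnorm_gt0 r_surj delta_gt0 K'_gt0.
rewrite /OmegaM /Omega0 /OmegaQ gram_blockmx_bilinear //.
under eq_bigr do rewrite gram_blockmx_bilinear //.
rewrite /Sb /Sbar scalerDr scaler_sumr mulmxDr mulmxDl mulmx_sumr mulmx_suml.
under [in RHS]eq_bigr do rewrite -scalemxAr -scalemxAl.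
rewrite scalerA -scalemxAr -scalemxAl; congr (_ *: _ + _).
by rewrite /c; field; rewrite gt_eqF.
Qed.

Lemma K_le_n : (K <= n)%N.
Proof.
have := leq_imset_card l 'I_n.
have -> : [set l i | i in 'I_n] = setT.
  by apply/setP => k; rewrite inE; have [i <-] := l_surj k; apply: imset_f.
by rewrite cardsT !card_ord.
Qed.

Lemma tr_Sbar : Sb^T = Sb.
Proof.
rewrite /Sb /Sbar linearD /= linearZ /= trmx_mul trmxK linear_sum /=; congr (_ + _).
by apply: eq_bigr => q _; rewrite trmx_mul trmxK.
Qed.

Lemma psdmx_Sbar : psdmx Sb.
Proof.
apply: psdmxD; last by apply: psdmx_sum => q _; apply: psdmx_gram.
by apply: psdmxZ; [rewrite divr_ge0 ?exprn_ge0 ?vnorm_ge0 | apply: psdmx_gram].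
Qed.

Lemma eigval_OmegaM :
  (forall i, (i < K)%N -> eigval (OmegaM l r theta delta E F) i = c * eigval Sb i)
  /\ (forall i, (K <= i)%N -> eigval (OmegaM l r theta delta E F) i = 0).
Proof.
have c_ge0 : 0 <= c by rewrite mulr_ge0 ?exprn_ge0 ?vnorm_ge0.
have charOmegaM : char_poly (OmegaM l r theta delta E F) = 'X^(n - K) * char_poly (c *: Sb).
  rewrite OmegaM_factor -mulmxA char_poly_mulmx ?K_le_n // -mulmxA.
  by rewrite normed_blockmx_orthonormal // mulmx1.
exact: eigval_scale_pad tr_Sbar psdmx_Sbar c_ge0 charOmegaM.
Qed.

Lemma Umat_factor (J : 'M[R]_K) : Umat l theta J = N *m J.
Proof.
apply/matrixP => i k; rewrite !mxE (bigD1 (l i)) //= !mxE eqxx big1 ?addr0 //.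
by move=> k' /negbTE neq; rewrite mxE eq_sym neq mul0r.
Qed.

Lemma Umat_evd (J : 'M[R]_K) (sigma : 'rV[R]_K) : evd Sb J sigma ->
  (Umat l theta J)^T *m Umat l theta J = 1%:M
  /\ OmegaM l r theta delta E F = Umat l theta J *m diag_mx (c *: sigma) *m (Umat l theta J)^T.
Proof.
case=> orthoJ _ Sb_evd; rewrite Umat_factor; split.
  by rewrite trmx_mul mulmxA -[J^T *m N^T *m N]mulmxA normed_blockmx_orthonormal // mulmx1.
by rewrite OmegaM_factor Sb_evd !linearZ /= trmx_mul -!scalemxAl !mulmxA.
Qed.

End Model.

Theorem proposition1 (R : rcfType) (K K' Q : nat)
  (hK : (2 <= K)%N) (hK' : (1 <= K')%N) (hQ : (1 <= Q)%N) :
  (* Parts 1 and 2: for every fixed instance of the model *)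
  (forall (n m : nat) (l : 'I_n -> 'I_K) (r : 'I_m -> 'I_K')
     (theta : 'I_n -> R) (delta : 'I_m -> R)
     (E : 'M[R]_K) (F : 'I_Q -> 'M[R]_(K, K')),
     model_ok l r theta delta E F ->
     let c := vnorm theta ^+ 2 * vnorm delta ^+ 2 in
     (forall i : nat, (i < K)%N ->
        eigval (OmegaM l r theta delta E F) i
        = c * eigval (Sbar l r theta delta E F) i)
     /\ (forall i : nat, (K <= i)%N -> eigval (OmegaM l r theta delta E F) i = 0)
     /\ (forall (J : 'M[R]_K) (sigma : 'rV[R]_K),
           evd (Sbar l r theta delta E F) J sigma ->
           (Umat l theta J)^T *m Umat l theta J = 1%:M
           /\ OmegaM l r theta delta E F
              = Umat l theta J *m diag_mx (c *: sigma) *m (Umat l theta J)^T))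
  /\
  (* Part 3: asymptotics, all quantities other than K, K', Q depending on n *)
  (forall (m : nat -> nat) (l : forall n : nat, 'I_n -> 'I_K)
     (r : forall n : nat, 'I_(m n) -> 'I_K')
     (theta : forall n : nat, 'I_n -> R) (delta : forall n : nat, 'I_(m n) -> R)
     (E : nat -> 'M[R]_K) (F : nat -> 'I_Q -> 'M[R]_(K, K'))
     (J : nat -> 'M[R]_K) (sigma : nat -> 'rV[R]_K) (n0 : nat),
     (forall n, (n0 <= n)%N ->
        model_ok (l n) (r n) (theta n) (delta n) (E n) (F n)
        /\ evd (Sbar (l n) (r n) (theta n) (delta n) (E n) (F n)) (J n) (sigma n)) ->
     (exists C : R, 0 < C /\ exists N0 : nat, forall n, (N0 <= n)%N ->
        forall k k' : 'I_K,
          blocknorm (l n) (theta n) k' / C <= blocknorm (l n) (theta n) k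
          /\ blocknorm (l n) (theta n) k <= C * blocknorm (l n) (theta n) k') ->
     exists C : R, 0 < C /\ exists N0 : nat, forall n, (N0 <= n)%N ->
       forall i : 'I_n,
         let Ui := vnorm (fun k : 'I_K => Umat (l n) (theta n) (J n) i k) in
         let b := theta n i / vnorm (theta n) in
         b / C <= Ui /\ Ui <= C * b).
Proof.
split.
  move=> n m l r theta delta E F [l_surj r_surj theta_rng delta_rng _] c.
  have theta_gt0 i : 0 < theta i by case/andP: (theta_rng i).
  have delta_gt0 j : 0 < delta j by case/andP: (delta_rng j).
  have K_gt0 : (0 < K)%N by apply: leq_trans hK.
  have [eig_lt eig_ge] := eigval_OmegaM E F l_surj r_surj theta_gt0 delta_gt0 K_gt0 hK'.
  by split=> //; split=> // J sigma; apply: Umat_evd.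
move=> m l r theta delta E F J sigma n0 model [C [C_gt0 [N0 comparable]]].
exists (K%:R * C + 1); split; first by rewrite ltr_wpDl ?mulr_ge0 ?ler0n ?ltW.
exists (maxn n0 N0) => n; rewrite geq_max => /andP [le_n0 le_N0] i.
have [[l_surj _ theta_rng _ _] [orthoJ _ _]] := model n le_n0.
apply: vnorm_row_Umat_comparable => // [i' | k k'].
  by case/andP: (theta_rng i').
by case: (comparable n le_N0 k k').
Qed.
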